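(* For every integer $h\ge 2$ there exist instances of the atomic model under the proportional-to-squares scheme whose Price of Stability is at least $\frac{h-1}{2}$.
   Context: Atomic model: finitely many players, player $i$ with stake $a_i>0$, $a_i<h$; threshold $h$. Each player opens her own pool or joins one; pools partition the players. A pool $C$ has reward $\rho(C)=1$ if its total stake is at least $h$ (winning) and $0$ otherwise. Proportional-to-squares scheme: player $i$ in pool $C$ receives $\frac{a_i^2}{\sum_{j\in C}a_j^2}\rho(C)$. A partition into winning pools is a Nash equilibrium if no player can strictly increase her payment by moving to another pool or opening a new pool alone. $OPT(G)$ is the maximum number of pools of stake at least $h$ in a partition of the players; $W(\Pi)$ is the number of winning pools of $\Pi$; the Price of Stability is $\min_\Pi OPT(G)/W(\Pi)$ over Nash equilibrium partitions. *)

From mathcomp Require Import all_boot all_order all_algebra.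
Set Implicit Arguments. Unset Strict Implicit. Unset Printing Implicit Defensive.
Import Order.TTheory GRing.Theory Num.Theory.
Local Open Scope ring_scope.

Section Game.
Variables (R : realFieldType) (n : nat) (a : 'I_n -> R) (h : nat).

Definition stake (C : {set 'I_n}) : R := \sum_(j in C) a j.

Definition winning (C : {set 'I_n}) : bool := h%:R <= stake C.
Definition rho (C : {set 'I_n}) : R := if winning C then 1 else 0.

Definition payment (i : 'I_n) (C : {set 'I_n}) : R :=
  a i ^+ 2 / (\sum_(j in C) a j ^+ 2) * rho C.

Definition W (P : {set {set 'I_n}}) : nat := #|[set C in P | winning C]|.

Definition OPT : nat :=
  \max_(P : {set {set 'I_n}} | partition P [set: 'I_n]) W P.

Definition is_NE (P : {set {set 'I_n}}) : Prop :=
  [/\ partition P [set: 'I_n],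
      (forall C, C \in P -> winning C) &
      forall i : 'I_n,
        (forall C', C' \in P -> C' != pblock P i ->
           payment i (C' :|: [set i]) <= payment i (pblock P i)) /\
        payment i [set i] <= payment i (pblock P i)].

End Game.

(* One heavy player of stake h - 1/2 and h(h-1) + 1 players of stake 1.  No
   player wins alone, so the grand coalition is an equilibrium.  In any
   equilibrium the heavy player's pool holds some unit player i, whose share
   there is at most 1 / ((h - 1/2)^2 + 1); any other pool has at most h(h-1)
   unit players, so i joining it would earn at least 1 / (h(h-1) + 1), which is
   more since (h - 1/2)^2 > h(h-1).  Hence every equilibrium has exactly one
   winning pool, while blocks of h consecutive players give h - 1 of them. *)

From mathcomp Require Import all_boot all_order all_algebra ring lra.
Import Order.TTheory GRing.Theory Num.Theory.
Local Open Scope ring_scope.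

Definition sqstake {R : realFieldType} {n : nat} (a : 'I_n -> R) (C : {set 'I_n}) : R :=
  \sum_(j in C) a j ^+ 2.

Section Game.
Context {R : realFieldType} {n : nat} {a : 'I_n -> R} {h : nat}.

Lemma payment_ge0 i C : 0 <= payment a h i C.
Proof.
rewrite /payment /rho; case: winning; rewrite ?mulr0 // mulr1.
by rewrite divr_ge0 ?sqr_ge0 ?sumr_ge0 // => j _; rewrite sqr_ge0.
Qed.

Lemma payment_set1 i : a i < h%:R -> payment a h i [set i] = 0.
Proof.
by move=> ai_lt; rewrite /payment /rho /winning /stake !big_set1 leNgt ai_lt mulr0.
Qed.

Lemma W_is_NE P : is_NE a h P -> W a h P = #|P|.
Proof.
case=> _ win _; rewrite /W (_ : [set C in P | winning a h C] = P) //; apply/setP => C.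
by rewrite inE; apply/andb_idr; apply: win.
Qed.

Lemma W_le_OPT P : partition P [set: 'I_n] -> (W a h P <= OPT a h)%N.
Proof. exact: (@leq_bigmax_cond _ (partition^~ [set: 'I_n]) (W a h)). Qed.

Lemma winning_card : (forall i, 1 <= a i) ->
  forall C : {set 'I_n}, (h <= #|C|)%N -> winning a h C.
Proof.
move=> a_ge1 C hC; rewrite /winning /stake.
by apply: le_trans (ler_sum _ (fun i _ => a_ge1 i)); rewrite sumr_const ler_nat.
Qed.

Section PositiveThreshold.
Hypothesis h_gt0 : (0 < h)%N.

Lemma winning_neq0 {C : {set 'I_n}} : winning a h C -> C != set0.
Proof.
apply: contraTneq => ->.
by rewrite /winning /stake big_set0 -ltNge ltr0n.
Qed.

Lemma grand_coalition_NE : (forall i, a i < h%:R) ->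
  winning a h [set: 'I_n] -> is_NE a h [set [set: 'I_n]].
Proof.
move=> a_lt winT.
have pblockT i : pblock [set [set: 'I_n]] i = [set: 'I_n].
  by apply: def_pblock; rewrite ?trivIset1 ?set11 ?inE.
split.
- by rewrite /partition cover1 eqxx trivIset1 in_set1 eq_sym winning_neq0.
- by move=> C /set1P ->.
- move=> i; rewrite pblockT; split; first by move=> C /set1P ->; rewrite eqxx.
  by rewrite payment_set1 ?payment_ge0.
Qed.

Lemma W_preim_partition (f : 'I_n -> nat) m :
  (forall k, (k < m)%N -> winning a h [set i | f i == k]) ->
  (m <= W a h (preim_partition f [set: 'I_n]))%N.
Proof.
move=> win_fibre.
set fibre := fun k : 'I_m => [set i | f i == k].
have fibre_inj : injective fibre.
  move=> k k' eq_kk'; apply: ord_inj.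
  have /set0Pn [i i_k] : fibre k != set0 := winning_neq0 (win_fibre k (ltn_ord k)).
  by move: i_k (i_k); rewrite {1}eq_kk' !inE => /eqP <- /eqP.
rewrite -[m]card_ord -(card_imset _ fibre_inj) /W subset_leq_card //.
apply/subsetP => _ /imsetP[k _ ->]; rewrite inE win_fibre // andbT.
have /set0Pn [i] := winning_neq0 (win_fibre k (ltn_ord k)).
rewrite inE => /eqP fi; apply/imsetP; exists i; rewrite ?inE //.
by apply/setP => j; rewrite !inE fi.
Qed.

End PositiveThreshold.

Section PositiveStakes.
Hypothesis a_gt0 : forall i, 0 < a i.

Lemma winningS (C D : {set 'I_n}) : C \subset D -> winning a h C -> winning a h D.
Proof.
move=> sCD; rewrite /winning /stake => /le_trans; apply.
by rewrite [leRHS](big_setID C) /= (setIidPr sCD) lerDl sumr_ge0 // => j _; rewrite ltW.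
Qed.

Lemma sqstake_gt0 (C : {set 'I_n}) i : i \in C -> 0 < sqstake a C.
Proof.
move=> iC; rewrite /sqstake (bigD1 i) //= ltr_pwDl ?exprn_gt0 ?sumr_ge0 //.
by move=> j _; rewrite sqr_ge0.
Qed.

Lemma sqstake_le_of_NE {P C0 C i} : is_NE a h P ->
  C0 \in P -> C \in P -> C != C0 -> i \in C0 ->
  sqstake a C0 <= sqstake a C + a i ^+ 2.
Proof.
case=> /and3P[_ trivP _] win dev C0P CP neqC i_C0.
have pblock_i : pblock P i = C0 by apply: def_pblock.
have i_notC : i \notin C.
  by rewrite (disjointFl (trivIsetP trivP _ _ CP C0P neqC) i_C0).
have [/(_ C CP) + _] := dev i; rewrite pblock_i => /(_ neqC).
have winCi : winning a h (C :|: [set i]) by apply: winningS (win C CP); apply: subsetUl.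
rewrite /payment /rho winCi win // !mulr1 -/(sqstake a _) -/(sqstake a _).
have -> : sqstake a (C :|: [set i]) = sqstake a C + a i ^+ 2.
  by rewrite /sqstake setUC big_setU1 //= addrC.
have a2_gt0 : 0 < a i ^+ 2 by rewrite exprn_gt0.
have sqC_ge0 : 0 <= sqstake a C by rewrite sumr_ge0 // => j _; rewrite sqr_ge0.
have sqC0_gt0 : 0 < sqstake a C0 by apply: sqstake_gt0 i_C0.
by rewrite ler_pM2l // lef_pV2 ?posrE ?ltr_pwDr.
Qed.

End PositiveStakes.
End Game.

Section HeavyPlayerInstance.
Variables (R : realFieldType) (h : nat).
Hypothesis h_ge2 : (2 <= h)%N.

Definition players : nat := (h * (h - 1)).+2.
Definition big_stake : R := h%:R - 2^-1.
Definition stakes (i : 'I_players) : R := if i == ord0 then big_stake else 1.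

Let h_gt0 : (0 < h)%N. Proof. exact: leq_trans h_ge2. Qed.
Let hR_ge2 : 2 <= h%:R :> R. Proof. by rewrite (ler_nat R 2). Qed.

Lemma stakes_ge1 i : 1 <= stakes i.
Proof. by rewrite /stakes /big_stake; case: ifP => _ //; have := hR_ge2; lra. Qed.

Lemma stakes_lt i : stakes i < h%:R.
Proof. by rewrite /stakes /big_stake; case: ifP => _; have := hR_ge2; lra. Qed.

Lemma stakes_gt0 i : 0 < stakes i.
Proof. exact: lt_le_trans ltr01 (stakes_ge1 i). Qed.

Lemma stakes_unit i : i != ord0 -> stakes i = 1.
Proof. by rewrite /stakes => /negbTE ->. Qed.

Lemma sqstake_unit (C : {set 'I_players}) : ord0 \notin C ->
  sqstake stakes C = #|C|%:R.
Proof.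
move=> C_0; rewrite /sqstake -sumr_const; apply: eq_bigr => j j_C.
by rewrite stakes_unit ?expr1n //; apply: contraNneq C_0 => <-.
Qed.

Lemma grand_coalition_stakes_NE : is_NE stakes h [set [set: 'I_players]].
Proof.
apply: grand_coalition_NE => //; first exact: stakes_lt.
apply: winning_card stakes_ge1 _ _.
by rewrite cardsT card_ord /players leqW // leqW // leq_pmulr // subn_gt0.
Qed.

Lemma sqstake_disjoint_lt (C C0 : {set 'I_players}) i :
  ord0 \in C0 -> i \in C0 -> i != ord0 -> [disjoint C & C0] ->
  sqstake stakes C + stakes i ^+ 2 < sqstake stakes C0.
Proof.
move=> C0_0 C0_i i_neq0 disC.
have C_0 : ord0 \notin C by rewrite (disjointFl disC C0_0).
have cardC : (#|C| <= h * (h - 1))%N.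
  have /subset_leq_card : C \subset ~: [set ord0; i].
    apply/subsetP => j C_j; rewrite !inE negb_or.
    by apply/andP; split; apply: contraTneq C_j => ->; rewrite (disjointFl disC).
  move/leq_trans; apply.
  by rewrite cardsCs setCK cards2 eq_sym i_neq0 card_ord /players subn2.
have sqC0 : big_stake ^+ 2 + 1 <= sqstake stakes C0.
  rewrite /sqstake (bigD1 ord0) //= (bigD1 i) /=; last by rewrite C0_i i_neq0.
  rewrite addrA /stakes eqxx (negbTE i_neq0) expr1n lerDl.
  by rewrite sumr_ge0 // => j _; rewrite sqr_ge0.
have big_stake2 : big_stake ^+ 2 = (h * (h - 1))%:R + 4^-1 :> R.
  by rewrite natrM natrB ?(leq_trans _ h_ge2) // /big_stake; field.
move: cardC; rewrite -(ler_nat R) -(sqstake_unit _ C_0) stakes_unit // expr1n.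
by move: sqC0; rewrite big_stake2; lra.
Qed.

Lemma is_NE_stakes_card1 P : is_NE stakes h P -> #|P| = 1%N.
Proof.
move=> NE; have [/and3P[/eqP coverP trivP _] win _] := NE.
set C0 := pblock P ord0.
have C0P : C0 \in P by rewrite pblock_mem // coverP inE.
have C0_0 : ord0 \in C0 by rewrite mem_pblock coverP inE.
have [i C0_i i_neq0] : exists2 i, i \in C0 & i != ord0.
  have [C0E | [i]] := set_0Vmem (C0 :\ ord0); last by rewrite !inE => /andP[]; exists i.
  have := win C0 C0P; rewrite -(setD1K C0_0) C0E setU0.
  by rewrite /winning /stake big_set1 leNgt stakes_lt.
have P_C0 C : C \in P -> C = C0.
  move=> CP; apply/eqP; apply: contraT => neqC.
  have gain : sqstake stakes C + stakes i ^+ 2 < sqstake stakes C0.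
    by apply: sqstake_disjoint_lt => //; apply: (trivIsetP trivP).
  by have := sqstake_le_of_NE stakes_gt0 NE C0P CP neqC C0_i; rewrite leNgt gain.
apply/eqP/cards1P; exists C0; apply/eqP; rewrite eqEsubset sub1set C0P andbT.
by apply/subsetP => C /P_C0 ->; rewrite set11.
Qed.

Lemma W_stakes_NE P : is_NE stakes h P -> W stakes h P = 1%N.
Proof. by move=> NE; rewrite W_is_NE // is_NE_stakes_card1. Qed.

Lemma card_divn_fibre_ge k :
  (k < h - 1)%N -> (h <= #|[set i : 'I_players | i %/ h == k]|)%N.
Proof.
move=> k_lt; have lt_players (j : 'I_h) : (k * h + j < players)%N.
  apply: (@leq_trans (k.+1 * h)); first by rewrite mulSn addnC ltn_add2r.
  by rewrite /players mulnC leqW // leqW // leq_mul2l k_lt orbT.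
have inj : injective (fun j : 'I_h => inord (k * h + j) : 'I_players).
  by move=> j j' /(congr1 val); rewrite /= !inordK // => /addnI /ord_inj.
rewrite -[h in (h <= _)%N]card_ord -(card_imset _ inj) subset_leq_card //.
apply/subsetP => _ /imsetP[j _ ->]; rewrite inE inordK //.
by rewrite divnMDl // divn_small // addn0.
Qed.

Lemma OPT_stakes_ge : (h - 1 <= OPT stakes h)%N.
Proof.
pose quotient_by_h (i : 'I_players) := (i %/ h)%N.
apply: leq_trans (W_le_OPT _ (preim_partitionP quotient_by_h setT)).
apply: W_preim_partition => // k k_lt.
by apply: winning_card stakes_ge1 _ _; apply: card_divn_fibre_ge.
Qed.

End HeavyPlayerInstance.

Theorem theorem6p1 (R : realFieldType) (h : nat) : (2 <= h)%N ->
  exists (n : nat) (a : 'I_n -> R),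
    (forall i, 0 < a i /\ a i < h%:R) /\
    (exists P, is_NE a h P) /\
    (forall P, is_NE a h P ->
       (0 < W a h P)%N /\
       (h%:R - 1) / 2 <= (OPT a h)%:R / (W a h P)%:R :> R).
Proof.
move=> h_ge2; exists (players h), (stakes R h); split; [|split].
- by move=> i; rewrite stakes_gt0 ?stakes_lt.
- by exists [set [set: 'I_(players h)]]; apply: grand_coalition_stakes_NE.
- move=> P NE; rewrite (W_stakes_NE R h h_ge2 P NE) divr1; split => //.
  have := OPT_stakes_ge R h h_ge2; rewrite -(ler_nat R) natrB ?(ltnW h_ge2) //.
  by have := ler_nat R 2 h; rewrite h_ge2; lra.
Qed.
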